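(* In every approval-based SCV instance, every committee maximizing the IW-PAV score among all committees satisfies IW-JR.
   Context: An approval-based sub-committee voting (SCV) instance consists of a set of voters $N=\{1,\ldots,n\}$, a finite set of candidates $C$ partitioned into candidate subsets $C_1,\ldots,C_\ell$, positive integer quotas $k_j\le |C_j|$, and approval ballots $A_i\subseteq C$ for $i\in N$. A committee is a set $W\subseteq C$ with $|W\cap C_j|=k_j$ for every $j$. Let $r(0)=0$ and $r(t)=\sum_{p=1}^t 1/p$ for $t\ge1$. The IW-PAV score of $W$ is $\sum_{j=1}^\ell\sum_{i\in N} r(|W\cap A_i\cap C_j|)$. $W$ satisfies Intra-wise JR (IW-JR) if for every $X\subseteq N$ and every $j$, whenever $|X|\ge n/k_j$ and $|(\bigcap_{i\in X}A_i)\cap C_j|\ge 1$, we have $|W\cap C_j\cap \bigcup_{i\in X}A_i|\ge 1$. *)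

From mathcomp Require Import all_boot all_order all_algebra.
Set Implicit Arguments. Unset Strict Implicit. Unset Printing Implicit Defensive.
Import Order.TTheory GRing.Theory Num.Theory.
Local Open Scope ring_scope.

(* The partition C_1..C_l is given
   by a map part : C -> 'I_l (C_j = [set c | part c == j]). *)

Definition cand_part (C : finType) (l : nat) (part : C -> 'I_l) (j : 'I_l)
  : {set C} := [set c | part c == j].

Definition harm (t : nat) : rat := \sum_(1 <= p < t.+1) (p%:R)^-1.

Definition is_committee (C : finType) (l : nat) (part : C -> 'I_l)
  (k : 'I_l -> nat) (W : {set C}) : Prop :=
  forall j : 'I_l, #|W :&: cand_part part j| = k j.

Definition iw_pav (n : nat) (C : finType) (l : nat) (part : C -> 'I_l)
  (A : 'I_n -> {set C}) (W : {set C}) : rat :=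
  \sum_(j < l) \sum_(i < n) harm #|W :&: A i :&: cand_part part j|.

Definition iw_jr (n : nat) (C : finType) (l : nat) (part : C -> 'I_l)
  (k : 'I_l -> nat) (A : 'I_n -> {set C}) (W : {set C}) : Prop :=
  forall (X : {set 'I_n}) (j : 'I_l),
    (n%:R / (k j)%:R <= #|X|%:R :> rat) ->
    (1 <= #|(\bigcap_(i in X) A i) :&: cand_part part j|)%N ->
    (1 <= #|W :&: cand_part part j :&: (\bigcup_(i in X) A i)|)%N.

From mathcomp Require Import all_boot all_order all_algebra.
From mathcomp Require Import zify.
Set Implicit Arguments. Unset Strict Implicit. Unset Printing Implicit Defensive.
Import Order.TTheory GRing.Theory Num.Theory.
Local Open Scope ring_scope.

(* Suppose W maximizes IW-PAV but a group X of at least n/k_j voters with a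
   common approved candidate c in C_j has no approved member of W in C_j.
   Swap c in for each of the k_j members w of W in C_j in turn.  Every voter of X
   gains at least 1 from each swap, while a voter outside X with t approved
   members of W in C_j loses at most 1/t from the swaps of those t members, so at
   most 1 in total.  Summed over all k_j swaps the score changes by at least
   (k_j + 1)|X| - n > 0, so some swap strictly improves W. *)

Lemma harm0 : harm 0 = 0.
Proof. by rewrite /harm big_geq. Qed.

Lemma harmS t : harm t.+1 = harm t + t.+1%:R^-1.
Proof. by rewrite /harm big_nat_recr. Qed.

Lemma harm1 : harm 1 = 1.
Proof. by rewrite harmS harm0 add0r invr1. Qed.

Lemma le_harm : {homo harm : m p / (m <= p)%N >-> m <= p}.
Proof.
move=> m p /subnKC <-; elim: (p - m)%N => [|d IHd]; first by rewrite addn0.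
by rewrite addnS harmS (le_trans IHd) // lerDl invr_ge0 ler0n.
Qed.

Lemma harm_ge1 t : (0 < t)%N -> 1 <= harm t.
Proof. by move=> t_gt0; rewrite -harm1 le_harm. Qed.

Lemma harm_sub_ge t t' : (0 < t)%N -> (t <= t'.+1)%N ->
  - t%:R^-1 <= harm t' - harm t.
Proof.
case: t => // t _ le_tt'; rewrite harmS opprD addrA -[X in X <= _]add0r.
by rewrite lerD2r subr_ge0 le_harm.
Qed.

Lemma sum_mem_div_card (R : numFieldType) (T : finType) (S B : {set T}) :
  \sum_(x in S) (x \in B)%:R / #|S :&: B|%:R <= 1 :> R.
Proof.
rewrite -mulr_suml -natr_sum.
have -> : (\sum_(x in S) (x \in B) = #|S :&: B|)%N.
  rewrite -sum1_card big_mkcond [RHS]big_mkcond; apply: eq_bigr => x _.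
  by rewrite inE; case: (x \in S); case: (x \in B).
by have [-> | ?] := eqVneq #|S :&: B| 0%N; rewrite ?mul0r ?ler01 // mulfV ?pnatr_eq0.
Qed.

Section Swap.

Variables (n : nat) (C : finType) (l : nat) (part : C -> 'I_l).
Variable A : 'I_n -> {set C}.

Definition swap (W : {set C}) (w c : C) : {set C} := c |: (W :\ w).

Definition part_utility (W : {set C}) (j : 'I_l) (i : 'I_n) : rat :=
  harm #|W :&: A i :&: cand_part part j|.

Lemma setI_swap W w c (B : {set C}) :
  c \notin B -> w \notin B -> swap W w c :&: B = W :&: B.
Proof.
move=> cB wB; apply/setP => x; rewrite !inE.
have [-> | _] := eqVneq x c; first by rewrite (negbTE cB) !andbF.
by have [-> | _] := eqVneq x w; rewrite ?(negbTE wB) ?andbF.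
Qed.

Lemma committee_swap k W w c :
  is_committee part k W -> w \in W -> c \notin W -> part w = part c ->
  is_committee part k (swap W w c).
Proof.
move=> comW wW cW part_wc j; have [<- | neq_j] := eqVneq (part c) j; last first.
  by rewrite setI_swap ?inE ?part_wc ?neq_j.
have -> : swap W w c :&: cand_part part (part c) =
          c |: (W :&: cand_part part (part c) :\ w).
  by apply/setP => x; rewrite !inE; have [-> | _] := eqVneq x c; rewrite ?eqxx //= andbA.
rewrite cardsU1 !inE (negbTE cW) andbF -(comW (part c)) [RHS](cardsD1 w).
by rewrite !inE wW part_wc eqxx.
Qed.

Lemma iw_pav_swap W w c j :
  w \in cand_part part j -> c \in cand_part part j ->
  iw_pav part A (swap W w c) - iw_pav part A W =
  \sum_(i < n) (part_utility (swap W w c) j i - part_utility W j i).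
Proof.
rewrite !inE => /eqP wj /eqP cj; rewrite /iw_pav -sumrB (bigD1 j) //=.
rewrite [X in _ + X]big1 ?addr0 ?sumrB // => j' neq_j; rewrite -sumrB big1 // => i _.
by rewrite -!setIA setI_swap ?subrr // !inE ?wj ?cj eq_sym (negbTE neq_j) andbF.
Qed.

Lemma part_utility_swap_ge W w c j i :
  - ((w \in A i)%:R / #|W :&: A i :&: cand_part part j|%:R) <=
  part_utility (swap W w c) j i - part_utility W j i.
Proof.
rewrite /part_utility.
have [w_in | w_notin] := boolP (w \in W :&: A i :&: cand_part part j).
  have wA : w \in A i by move: w_in; rewrite !inE => /andP[/andP[_ ->]].
  rewrite wA mul1r; apply: harm_sub_ge; first by apply/card_gt0P; exists w.
  have sub : W :&: A i :&: cand_part part j \subset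
             w |: (swap W w c :&: A i :&: cand_part part j).
    apply/subsetP => x; rewrite !inE; have [// | _] := eqVneq x w.
    by move=> /andP[/andP[-> ->] ->]; rewrite orbT.
  by rewrite (leq_trans (subset_leq_card sub)) // cardsU1 -add1n leq_add2r leq_b1.
rewrite (@le_trans _ _ 0) ?oppr_le0 ?divr_ge0 // subr_ge0 le_harm //.
apply: subset_leq_card; apply/subsetP => x x_in; rewrite !inE.
have [x_w | _] := eqVneq x w; first by rewrite -x_w x_in in w_notin.
by move: x_in; rewrite !inE => /andP[/andP[-> ->] ->]; rewrite orbT.
Qed.

Lemma part_utility_swap_newly_represented W w c j i :
  W :&: A i :&: cand_part part j = set0 -> c \in A i :&: cand_part part j ->
  1 <= part_utility (swap W w c) j i - part_utility W j i.
Proof.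
rewrite /part_utility => -> c_in; rewrite cards0 harm0 subr0 harm_ge1 //.
by apply/card_gt0P; exists c; rewrite -setIA in_setI c_in andbT setU11.
Qed.

Lemma sum_iw_pav_swap_gt0 W c j (X : {set 'I_n}) :
  c \in cand_part part j -> c \in \bigcap_(i in X) A i ->
  W :&: cand_part part j :&: \bigcup_(i in X) A i = set0 ->
  (n < #|W :&: cand_part part j|.+1 * #|X|)%N ->
  0 < \sum_(w in W :&: cand_part part j)
        (iw_pav part A (swap W w c) - iw_pav part A W).
Proof.
set S := W :&: cand_part part j => cj cX unrepresented n_lt.
(* Summing these per-voter bounds over all voters gives [(#|S| + 1) * #|X| - n]. *)
have voter_gain_ge i : (if i \in X then #|S|.+1%:R else 0) - 1 <=
    \sum_(w in S) (part_utility (swap W w c) j i - part_utility W j i).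
  case: ifP => iX; last first.
    rewrite sub0r (le_trans _ (ler_sum _ (fun w _ => part_utility_swap_ge W w c j i))) //.
    by rewrite sumrN lerN2 setIAC sum_mem_div_card.
  have -> : #|S|.+1%:R - 1 = \sum_(w in S) (1 : rat).
    by rewrite sumr_const -addn1 natrD addrK.
  apply: ler_sum => w _; apply: part_utility_swap_newly_represented.
    apply/eqP; rewrite -subset0 -unrepresented setIAC; apply: setIS.
    by apply/subsetP => x xAi; apply/bigcupP; exists i.
  by rewrite inE cj (bigcapP cX).
under eq_bigr => w /setIP[_ wj] do rewrite (iw_pav_swap W wj cj).
rewrite exchange_big /= (lt_le_trans _ (ler_sum _ (fun i _ => voter_gain_ge i))) //.
rewrite sumrB -big_mkcond /= !sumr_const card_ord -[_ *+ #|X|]mulr_natr.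
by rewrite -natrM subr_gt0 ltr_nat.
Qed.

End Swap.

Theorem mainTheorem9 (n : nat) (C : finType) (l : nat) (part : C -> 'I_l)
  (k : 'I_l -> nat) (A : 'I_n -> {set C})
  (hn : (0 < n)%N)
  (hk : forall j : 'I_l, (0 < k j <= #|cand_part part j|)%N)
  (W : {set C})
  (hW : is_committee part k W)
  (hmax : forall W' : {set C}, is_committee part k W' ->
            iw_pav part A W' <= iw_pav part A W) :
  iw_jr part k A W.
Proof.
move=> X j hX; rewrite !card_gt0 => /set0Pn[c /setIP[cX cj]].
apply/negP => /eqP unrepresented.
have n_le : (n <= k j * #|X|)%N.
  have k_gt0 : (0 < k j)%N by case/andP: (hk j).
  by rewrite mulnC -(ler_nat rat) natrM -ler_pdivrMr ?ltr0n.
have X_gt0 : (0 < #|X|)%N by nia.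
have [i0 i0X] := card_gt0P X_gt0.
have cW : c \notin W.
  apply/negP => cW; suff : c \in set0 by rewrite inE.
  rewrite -unrepresented !in_setI cW cj /=.
  by apply/bigcupP; exists i0; last exact: (bigcapP cX).
have n_lt : (n < #|W :&: cand_part part j|.+1 * #|X|)%N by rewrite hW mulSn; lia.
have := sum_iw_pav_swap_gt0 cj cX unrepresented n_lt; rewrite ltNge => /negP; apply.
apply: sumr_le0 => w /setIP[wW wj]; rewrite subr_le0; apply/hmax/committee_swap => //.
by move: wj cj; rewrite !inE => /eqP -> /eqP ->.
Qed.
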